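(* Let $N \geq 1$ and let $\mu$ be the uniform probability measure on the hypercube $\{0,1\}^N$. Let $\nu$ be any probability measure on $\{0,1\}^N$ satisfying $I(\nu|\mu) \geq 4W_1(\nu,\mu)$. Then $$H(\nu|\mu) \leq 2\sqrt{W_1(\nu,\mu)\, I(\nu|\mu)} - 2W_1(\nu,\mu).$$
   Context: For $x \in \{0,1\}^N$ and $i \in \{1,\dots,N\}$, $x^i$ denotes the configuration obtained from $x$ by flipping its $i$-th coordinate. Let $\rho = d\nu/d\mu$. The relative entropy is $H(\nu|\mu) = \sum_{x} \rho(x)\log\rho(x)\,\mu(x)$ (with $0\log 0 = 0$). The discrete (modified) Fisher information is $$I(\nu|\mu) = \frac{1}{2}\sum_{x\in\{0,1\}^N}\sum_{i=1}^N \big(\rho(x^i)-\rho(x)\big)\big(\log\rho(x^i)-\log\rho(x)\big)\mu(x),$$ with the value $+\infty$ if some term is infinite. The distance $W_1(\nu,\mu) = \inf \mathbb{E}[d(X,Y)]$, where the infimum is over all couplings of $X\sim\nu$ and $Y\sim\mu$, and $d$ is the Hamming distance on $\{0,1\}^N$. *)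

From HB Require Import structures.
From mathcomp Require Import all_boot all_order all_algebra.
From mathcomp Require Import all_classical all_reals all_analysis.
Unset Strict Implicit. Unset Printing Implicit Defensive.
Import Order.TTheory GRing.Theory Num.Theory.
Local Open Scope ring_scope.

Definition cube (N : nat) := {ffun 'I_N -> bool}.

Definition flip (N : nat) (x : cube N) (i : 'I_N) : cube N :=
  [ffun j => if j == i then ~~ x j else x j].

Definition hamming (N : nat) (x y : cube N) : nat := #|[set j | x j != y j]|.

Definition unif (R : realType) (N : nat) (x : cube N) : R := (2 ^+ N)^-1.

Definition is_prob (R : realType) (N : nat) (nu : cube N -> R) : Prop :=
  (forall x, 0 <= nu x) /\ \sum_(x : cube N) nu x = 1.

Definition dens (R : realType) (N : nat) (nu : cube N -> R) (x : cube N) : R :=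
  nu x / unif R N x.

Definition relH (R : realType) (N : nat) (nu : cube N -> R) : R :=
  \sum_(x : cube N)
     (if dens R N nu x == 0 then 0 else dens R N nu x * ln (dens R N nu x)) * unif R N x.

Definition fterm (R : realType) (a b : R) : \bar R :=
  if (a == 0) && (b == 0) then 0%E
  else if (a == 0) || (b == 0) then +oo%E
  else ((a - b) * (ln a - ln b))%:E.

Definition fisherI (R : realType) (N : nat) (nu : cube N -> R) : \bar R :=
  ((2%:R^-1)%:E *
   \sum_(x : cube N) \sum_(i < N)
      (fterm R (dens R N nu (flip N x i)) (dens R N nu x) * (unif R N x)%:E))%E.

Definition coupling (R : realType) (N : nat) (nu mu : cube N -> R)
  (pi : cube N * cube N -> R) : Prop :=
  (forall p, 0 <= pi p) /\
  (forall x, \sum_(y : cube N) pi (x, y) = nu x) /\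
  (forall y, \sum_(x : cube N) pi (x, y) = mu y).

Definition W1 (R : realType) (N : nat) (nu mu : cube N -> R) : R :=
  inf [set c : R | exists pi, coupling R N nu mu pi /\
        c = \sum_(p : cube N * cube N) pi p * (hamming N p.1 p.2)%:R].

(* Write rho = dnu/dmu and let P_q (0 < q < 1) be the noise operator that keeps
   each coordinate with probability q and flips it with probability 1 - q,
   realised as a product of one-coordinate mixes.  For each mix, convexity of
   t log t bounds the entropy loss by (1 - q) times the Fisher information in
   that direction, and joint convexity of (a - b)(log a - log b) shows that
   mixing does not increase Fisher information; hence
   H(nu|mu) <= (1 - q) I + Ent_mu(P_q rho).
   For a coupling pi of nu and mu, P_q rho mu and mu = P_q 1 mu are the images of
   the two marginals of pi under the noise kernel, so the log-sum inequality
   bounds Ent_mu(P_q rho) by the pi-average of the relative entropy between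
   kernel rows, which is (2q - 1)(log q - log(1 - q)) times the Hamming
   distance.  Taking 1 - q = sqrt(W_1 / I) <= 1/2 and log x <= x - 1 gives the
   bound.  A finite I forces rho > 0: a zero of rho next to a positive value
   makes a Fisher term infinite, and the cube is connected by single flips. *)

From HB Require Import structures.
From mathcomp Require Import all_boot all_order all_algebra.
From mathcomp Require Import all_classical all_reals all_analysis.
From mathcomp Require Import ring lra.

Set Implicit Arguments.
Unset Strict Implicit.
Unset Printing Implicit Defensive.
Import Order.TTheory GRing.Theory Num.Theory.
Local Open Scope ring_scope.

Section RelativeEntropy.
Variable R : realType.
Implicit Types a b c q : R.

Definition relent a b := a * (ln a - ln b).

Definition jeffreys a b := (a - b) * (ln a - ln b).

Lemma ln_le_subr1 {a} : 0 < a -> ln a <= a - 1.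
Proof. by move=> a0; have := @le_ln1Dx R (a - 1); rewrite [1 + _]addrC subrK; apply; lra. Qed.

Lemma subr_le_relent {a b} : 0 <= a -> 0 < b -> a - b <= relent a b.
Proof.
rewrite le0r => /orP[/eqP-> b0|a0 b0]; first by rewrite /relent mul0r sub0r oppr_le0 ltW.
have := ler_wpM2l (ltW a0) (ln_le_subr1 (divr_gt0 b0 a0)).
rewrite ln_div ?posrE // [a * (_ - 1)]mulrBr mulr1 mulrCA divff ?gt_eqF // mulr1 /relent; lra.
Qed.

Lemma relent_mull c a b : 0 <= c -> 0 < a -> 0 < b ->
  relent (c * a) (c * b) = c * relent a b.
Proof.
rewrite le0r => /orP[/eqP-> _ _|c0 a0 b0]; first by rewrite /relent !mul0r.
by rewrite /relent !lnM ?posrE //; ring.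
Qed.

Lemma log_sum (I : finType) (a b : I -> R) :
  (forall i, 0 <= a i) -> (forall i, 0 <= b i) -> (forall i, 0 < a i -> 0 < b i) ->
  0 < \sum_i a i -> 0 < \sum_i b i ->
  relent (\sum_i a i) (\sum_i b i) <= \sum_i relent (a i) (b i).
Proof.
move=> a0 b0 ab A0 B0; set A := \sum_i a i; set B := \sum_i b i.
have term i : a i - b i * (A / B) <= relent (a i) (b i) - a i * (ln A - ln B).
  have := a0 i; rewrite le0r => /orP[/eqP ai0|/(ab i) bi0].
    rewrite /relent ai0 !mul0r sub0r subr0 oppr_le0.
    by rewrite mulr_ge0 // divr_ge0 // ltW.
  have -> : relent (a i) (b i) - a i * (ln A - ln B) = relent (a i) (b i * (A / B)).
    by rewrite /relent lnM ?ln_div ?posrE ?divr_gt0 //; ring.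
  by apply: subr_le_relent => //; rewrite mulr_gt0 ?divr_gt0.
have : \sum_i (a i - b i * (A / B)) <= \sum_i (relent (a i) (b i) - a i * (ln A - ln B)).
  by apply: ler_sum => i _; exact: term.
rewrite !sumrB -!mulr_suml -/A -/B mulrCA divff ?gt_eqF // mulr1 subrr /relent; lra.
Qed.

Lemma relent_convex {q a b a' b'} : 0 < q < 1 -> 0 < a -> 0 < b -> 0 < a' -> 0 < b' ->
  relent (q * a + (1 - q) * a') (q * b + (1 - q) * b') <=
  q * relent a b + (1 - q) * relent a' b'.
Proof.
move=> /andP[q0 q1] a0 b0 a'0 b'0; have q'0 : 0 < 1 - q by lra.
have := @log_sum bool (fun i => if i then q * a else (1 - q) * a')
  (fun i => if i then q * b else (1 - q) * b').
rewrite !big_bool /= !relent_mull ?(ltW q0) ?(ltW q'0) //; apply.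
- by case; apply/ltW/mulr_gt0.
- by case; apply/ltW/mulr_gt0.
- by case => _; rewrite mulr_gt0.
- by rewrite addr_gt0 // mulr_gt0.
- by rewrite addr_gt0 // mulr_gt0.
Qed.

Lemma jeffreysE a b : jeffreys a b = relent a b + relent b a.
Proof. by rewrite /jeffreys /relent; ring. Qed.

Lemma jeffreys_ge0 a b : 0 < a -> 0 < b -> 0 <= jeffreys a b.
Proof.
move=> a0 b0; have := subr_le_relent (ltW a0) b0; have := subr_le_relent (ltW b0) a0.
by rewrite jeffreysE; lra.
Qed.

Lemma jeffreys_convex q a b a' b' : 0 < q < 1 -> 0 < a -> 0 < b -> 0 < a' -> 0 < b' ->
  jeffreys (q * a + (1 - q) * a') (q * b + (1 - q) * b') <=
  q * jeffreys a b + (1 - q) * jeffreys a' b'.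
Proof.
move=> q01 a0 b0 a'0 b'0; rewrite !jeffreysE.
have := relent_convex q01 a0 b0 a'0 b'0; have := relent_convex q01 b0 a0 b'0 a'0; lra.
Qed.

Lemma fterm_ge0 a b : 0 <= a -> 0 <= b -> (0 <= fterm R a b)%E.
Proof.
rewrite /fterm => a0 b0; case: ifP => // _; case: ifPn => // /norP[a_neq0 b_neq0].
by rewrite lee_fin; apply: jeffreys_ge0; rewrite lt0r ?a_neq0 ?b_neq0.
Qed.

Lemma fterm_gt0 a b : 0 < a -> 0 < b -> fterm R a b = (jeffreys a b)%:E.
Proof. by move=> a0 b0; rewrite /fterm !gt_eqF. Qed.

Lemma fterm_eqy a b : (a == 0) != (b == 0) -> fterm R a b = +oo%E.
Proof. by rewrite /fterm; case: (a == 0); case: (b == 0). Qed.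

Lemma le_mul_inf (S : set R) c g : (S !=set0)%classic -> 0 <= g ->
  (forall s, S s -> c <= g * s) -> c <= g * inf S.
Proof.
move=> [s0 Ss0]; rewrite le0r => /orP[/eqP-> cS|g0 cS].
  by rewrite mul0r; have := cS s0 Ss0; rewrite mul0r.
rewrite mulrC -ler_pdivrMr //; apply: lb_le_inf; first by exists s0.
by move=> s Ss; rewrite ler_pdivrMr // mulrC cS.
Qed.

Lemma ln_prod (I : Type) (r : seq I) (P : pred I) (F : I -> R) :
  (forall i, P i -> 0 < F i) -> ln (\prod_(i <- r | P i) F i) = \sum_(i <- r | P i) ln (F i).
Proof.
move=> F0; suff [] : 0 < \prod_(i <- r | P i) F i /\
    ln (\prod_(i <- r | P i) F i) = \sum_(i <- r | P i) ln (F i) by [].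
elim/big_rec2: _ => [|i p s Pi [p0 <-]]; first by rewrite ltr01 ln1.
by rewrite mulr_gt0 ?F0 // lnM ?posrE ?F0.
Qed.

End RelativeEntropy.

Lemma sum_pair (R : nmodType) (I J : finType) (F : I * J -> R) :
  \sum_p F p = \sum_i \sum_j F (i, j).
Proof. by rewrite pair_bigA; apply: eq_bigr => -[]. Qed.

Lemma sum_ffun_prod_coord (R : comPzSemiRingType) (I J : finType) (G : I -> J -> R)
    (i : I) (h : J -> R) :
  \sum_(x : {ffun I -> J}) (\prod_j G j (x j)) * h (x i) =
  (\sum_b G i b * h b) * \prod_(j | j != i) \sum_b G j b.
Proof.
pose G' j b := G j b * (if j == i then h b else 1).
have G'E (x : {ffun I -> J}) : (\prod_j G j (x j)) * h (x i) = \prod_j G' j (x j).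
  by rewrite /G' big_split /= -big_mkcond /= big_pred1_eq.
rewrite (eq_bigr _ (fun x _ => G'E x)) -(bigA_distr_bigA G') (bigD1 i) //=.
congr (_ * _); first by apply: eq_bigr => b _; rewrite /G' eqxx.
by apply: eq_bigr => j ji; apply: eq_bigr => b _; rewrite /G' (negbTE ji) mulr1.
Qed.


Section Hypercube.
Variables (R : realType) (N : nat).
Implicit Types (x y z : cube N) (i j : 'I_N).

Lemma flipE x i j : flip N x i j = (j == i) (+) x j.
Proof. by rewrite ffunE; case: eqP. Qed.

Lemma flipK i : involutive (flip N ^~ i).
Proof. by move=> x; apply/ffunP => j; rewrite !flipE addbA addbb. Qed.

Lemma flipC x i j : flip N (flip N x i) j = flip N (flip N x j) i.
Proof. by apply/ffunP => k; rewrite !flipE addbCA. Qed.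

Lemma sum_flip i (F : cube N -> R) : \sum_x F (flip N x i) = \sum_x F x.
Proof. by rewrite [RHS](reindex_inj (inv_inj (flipK i))). Qed.

Lemma hamming_flip x y i : x i != y i -> hamming N (flip N x i) y = (hamming N x y).-1.
Proof.
move=> xyi; rewrite /hamming (cardsD1 i [set j | x j != y j]) inE xyi add1n /=.
apply: eq_card => j; rewrite !inE flipE.
by case: (eqVneq j i) => [->|] //=; case: (x i) (y i) xyi => [] [].
Qed.

Lemma flip_invariant_const (P : cube N -> bool) :
  (forall x i, P (flip N x i) = P x) -> forall x y, P x = P y.
Proof.
move=> Pflip x y; move Hn : (hamming N x y) => n.
elim: n x Hn => [|n IHn] x Hn.
  suff -> : x = y by [].
  apply/ffunP => j; apply/eqP; apply: contraT => xyj.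
  by move/card0_eq: Hn => /(_ j); rewrite inE xyj.
have /card_gt0P[i] : (0 < hamming N x y)%N by rewrite Hn.
rewrite inE => xyi; rewrite -(Pflip x i); apply: IHn.
by rewrite hamming_flip // Hn.
Qed.

Definition ent (f : cube N -> R) := \sum_x f x * ln (f x).

Definition fisher_dir i (f : cube N -> R) := \sum_x jeffreys (f (flip N x i)) (f x) / 2.

Definition cost (pi : cube N * cube N -> R) := \sum_p pi p * (hamming N p.1 p.2)%:R.

Lemma fisher_dirE i f : fisher_dir i f = \sum_x (f x - f (flip N x i)) * ln (f x).
Proof.
set S := \sum_x _; have Sflip : S = \sum_x (f (flip N x i) - f x) * ln (f (flip N x i)).
  by rewrite -(sum_flip i); apply: eq_bigr => x _; rewrite flipK.
rewrite /fisher_dir -mulr_suml.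
have -> : \sum_x jeffreys (f (flip N x i)) (f x) = S + S.
  by rewrite {2}Sflip -big_split; apply: eq_bigr => x _; rewrite /jeffreys /=; ring.
by field.
Qed.

Lemma densE nu x : nu x = (2 ^+ N)^-1 * dens R N nu x.
Proof. by rewrite /dens /unif mulrC divfK // invr_eq0 expf_neq0 // pnatr_eq0. Qed.

Lemma dens_ge0 nu : is_prob R N nu -> forall x, 0 <= dens R N nu x.
Proof. by case=> nu0 _ x; rewrite divr_ge0 // invr_ge0 exprn_ge0. Qed.

Lemma relH_dens_gt0E nu : (forall x, 0 < dens R N nu x) ->
  relH R N nu = (2 ^+ N)^-1 * ent (dens R N nu).
Proof.
by move=> rho0; rewrite /relH /ent mulr_sumr; apply: eq_bigr => x _; rewrite gt_eqF // mulrC.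
Qed.

Lemma fisherI_dens_gt0E nu : (forall x, 0 < dens R N nu x) ->
  fisherI R N nu = ((2 ^+ N)^-1 * \sum_i fisher_dir i (dens R N nu))%:E.
Proof.
move=> rho0; rewrite /fisherI.
under eq_bigr => x _ do under eq_bigr => i _ do rewrite fterm_gt0 // -EFinM.
under eq_bigr => x _ do rewrite sumEFin.
rewrite sumEFin -EFinM exchange_big !mulr_sumr; congr EFin; apply: eq_bigr => i _.
by rewrite /fisher_dir /unif -!mulr_suml; ring.
Qed.

Lemma fisherI_eqy nu x i : is_prob R N nu ->
  (dens R N nu (flip N x i) == 0) != (dens R N nu x == 0) -> fisherI R N nu = +oo%E.
Proof.
move=> nu_prob xi0; have nNy (e : \bar R) : (0 <= e)%E -> e != -oo%E by case: e.
have term_ge0 x' i' :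
    (0 <= fterm R (dens R N nu (flip N x' i')) (dens R N nu x') * (unif R N x')%:E)%E.
  by rewrite mule_ge0 ?fterm_ge0 ?dens_ge0 // lee_fin invr_ge0 exprn_ge0.
rewrite /fisherI; set S := (\sum_x _)%E.
suff -> : S = +oo%E by rewrite gt0_muley // lte_fin invr_gt0.
apply/esum_eqyP; first by move=> x' _; apply/nNy/sume_ge0 => i' _.
exists x; split => //; apply/esum_eqyP; first by move=> i' _; apply/nNy.
by exists i; rewrite fterm_eqy // gt0_mulye // lte_fin invr_gt0 exprn_gt0.
Qed.

Lemma fisherI_fin_dens_gt0 nu I : is_prob R N nu -> fisherI R N nu = I%:E ->
  forall x, 0 < dens R N nu x.
Proof.
move=> nu_prob fisherI_fin.
have flip0 x i : (dens R N nu (flip N x i) == 0) = (dens R N nu x == 0).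
  have [/(fisherI_eqy nu_prob)|/negPn/eqP //] :=
    boolP ((dens R N nu (flip N x i) == 0) != (dens R N nu x == 0)).
  by rewrite fisherI_fin.
move=> x; rewrite lt0r dens_ge0 // andbT; apply/negP => /eqP rho_x0.
case: nu_prob => _; rewrite big1 => [/esym/eqP|y _]; first by rewrite oner_eq0.
rewrite densE; move: (flip_invariant_const flip0 y x); rewrite rho_x0 eqxx => /eqP->.
by rewrite mulr0.
Qed.

Lemma sum_unif : \sum_x unif R N x = 1.
Proof.
rewrite /unif sumr_const card_ffun card_bool card_ord -[_ *+ (2 ^ N)]mulr_natr natrX.
by rewrite mulVf // expf_neq0 // pnatr_eq0.
Qed.

Lemma prod_coupling nu : is_prob R N nu ->
  coupling R N nu (unif R N) (fun p => nu p.1 * unif R N p.2).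
Proof.
case=> nu0 nu1; split=> [p|]; first by rewrite mulr_ge0 // invr_ge0 exprn_ge0.
split=> [x|y] /=; first by rewrite -mulr_sumr sum_unif mulr1.
by rewrite -mulr_suml nu1 mul1r.
Qed.

Lemma le_mulW1 nu c g : is_prob R N nu -> 0 <= g ->
  (forall pi, coupling R N nu (unif R N) pi -> c <= g * cost pi) ->
  c <= g * W1 R N nu (unif R N).
Proof.
move=> nu_prob g0 c_le; apply: le_mul_inf => // [|_ [pi [pi_cpl ->]]]; last exact: c_le.
by exists (cost (fun p => nu p.1 * unif R N p.2)), (fun p => nu p.1 * unif R N p.2);
  split => //; apply: prod_coupling.
Qed.

Lemma W1_ge0 nu : is_prob R N nu -> 0 <= W1 R N nu (unif R N).
Proof.
move=> nu_prob; rewrite -[W1 _ _ _ _]mul1r; apply: le_mulW1 => // pi [pi0 _].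
by rewrite mul1r; apply: sumr_ge0 => p _; rewrite mulr_ge0.
Qed.

Section Smoothing.
Variable q : R.
Hypothesis q01 : 0 < q < 1.

Definition mix i (f : cube N -> R) x := q * f x + (1 - q) * f (flip N x i).

Definition smooth (s : seq 'I_N) f := foldr mix f s.

Lemma mix_gt0 i f : (forall x, 0 < f x) -> forall x, 0 < mix i f x.
Proof. by move: q01 => /andP[q0 q1] f0 x; rewrite addr_gt0 ?mulr_gt0 ?subr_gt0. Qed.

Lemma smooth_gt0 s f : (forall x, 0 < f x) -> forall x, 0 < smooth s f x.
Proof. by move=> f0; elim: s => //= i s IHs; apply: mix_gt0. Qed.

Lemma fisher_dir_mix i j f : (forall x, 0 < f x) -> fisher_dir i (mix j f) <= fisher_dir i f.
Proof.
move=> f0; rewrite /fisher_dir -!mulr_suml ler_wpM2r ?invr_ge0 ?ler0n //.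
have mixx x : jeffreys (mix j f (flip N x i)) (mix j f x) <=
    q * jeffreys (f (flip N x i)) (f x) +
    (1 - q) * jeffreys (f (flip N (flip N x j) i)) (f (flip N x j)).
  by rewrite /mix flipC; apply: jeffreys_convex.
apply: le_trans (ler_sum _ (fun x _ => mixx x)) _.
rewrite big_split /= -!mulr_sumr (sum_flip j (fun x => jeffreys (f (flip N x i)) (f x))).
by rewrite -mulrDl addrC subrK mul1r.
Qed.

Lemma fisher_dir_smooth i s f : (forall x, 0 < f x) -> fisher_dir i (smooth s f) <= fisher_dir i f.
Proof.
move=> f0; elim: s => //= j s IHs.
by apply: le_trans IHs; apply/fisher_dir_mix/smooth_gt0.
Qed.

Lemma ent_mix i f : (forall x, 0 < f x) -> ent f <= (1 - q) * fisher_dir i f + ent (mix i f).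
Proof.
move=> f0; rewrite -lerBlDr /ent -sumrB fisher_dirE.
have mixx x : f x * ln (f x) - mix i f x * ln (mix i f x) <=
    (1 - q) * ((f x - f (flip N x i)) * ln (f x) + (f x - f (flip N x i))).
  have := subr_le_relent (ltW (mix_gt0 i f0 x)) (f0 x).
  rewrite /relent /mix; lra.
apply: le_trans (ler_sum _ (fun x _ => mixx x)) _.
by rewrite -mulr_sumr big_split /= sumrB sum_flip subrr addr0.
Qed.

Lemma ent_smooth s f : (forall x, 0 < f x) ->
  ent f <= (1 - q) * \sum_(i <- s) fisher_dir i f + ent (smooth s f).
Proof.
move=> f0; elim: s => [|i s IHs] /=; first by rewrite big_nil mulr0 add0r.
apply: le_trans IHs _; rewrite big_cons mulrDr -addrA addrCA lerD2l.
apply: le_trans (ent_mix i (smooth_gt0 s f0)) _; rewrite lerD2r.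
by rewrite ler_wpM2l ?fisher_dir_smooth // subr_ge0 ltW //; case/andP: q01.
Qed.

Definition noise_wt (b : bool) : R := if b then q else 1 - q.

Definition noise_on (s : seq 'I_N) z x : R :=
  \prod_i (if i \in s then noise_wt (z i == x i) else (z i == x i)%:R).

Lemma noise_on_nil z x : noise_on [::] z x = (z == x)%:R.
Proof.
rewrite /noise_on (eq_bigr (fun i => (z i == x i)%:R)) //.
have [->|] := eqVneq z x; first by rewrite big1 // => i _; rewrite eqxx.
move/eqP; rewrite -ffunP => /existsNP[i /eqP zxi].
by apply/eqP/prodf_eq0; exists i => //; rewrite (negbTE zxi).
Qed.

Lemma noise_on_cons i s z x : i \notin s ->
  noise_on (i :: s) z x = q * noise_on s z x + (1 - q) * noise_on s (flip N z i) x.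
Proof.
move=> si; rewrite /noise_on (bigD1 i) //.
rewrite [X in q * X](bigD1 i) // [X in (1 - q) * X](bigD1 i) //=.
set P := \prod_(j | j != i) (if j \in s then noise_wt (z j == x j) else (z j == x j)%:R).
have -> : \prod_(j | j != i) (if j \in i :: s then noise_wt (z j == x j) else (z j == x j)%:R) = P.
  by apply: eq_bigr => j ji; rewrite in_cons (negbTE ji).
have -> : \prod_(j | j != i)
    (if j \in s then noise_wt (flip N z i j == x j) else (flip N z i j == x j)%:R) = P.
  by apply: eq_bigr => j ji; rewrite flipE (negbTE ji).
rewrite mem_head (negbTE si) flipE eqxx /noise_wt.
by case: (z i); case: (x i) => /=; ring.
Qed.

Lemma smooth_noise_on s f z : uniq s -> smooth s f z = \sum_x noise_on s z x * f x.
Proof.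
elim: s z => [|i s IHs] z /=.
  move=> _; rewrite (bigD1 z) //= noise_on_nil eqxx mul1r big1 ?addr0 // => x zx.
  by rewrite noise_on_nil eq_sym (negbTE zx) mul0r.
case/andP=> si us; rewrite /mix !IHs // !mulr_sumr -big_split /=.
by apply: eq_bigr => x _; rewrite noise_on_cons //; ring.
Qed.

Definition noise z x : R := \prod_i noise_wt (z i == x i).

Lemma smooth_noise f z : smooth (enum 'I_N) f z = \sum_x noise z x * f x.
Proof.
rewrite smooth_noise_on ?enum_uniq //; apply: eq_bigr => x _.
by congr (_ * _); apply: eq_bigr => i _; rewrite mem_enum.
Qed.

Lemma noise_wt_gt0 b : 0 < noise_wt b.
Proof. by case/andP: q01 => q0 q1; case: b; rewrite /noise_wt ?subr_gt0. Qed.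

Lemma noise_gt0 z x : 0 < noise z x.
Proof. by apply: prodr_gt0 => i _; apply: noise_wt_gt0. Qed.

Lemma sum_noise z : \sum_x noise z x = 1.
Proof.
rewrite -(bigA_distr_bigA (fun i b => noise_wt (z i == b))) big1 // => i _.
by rewrite big_bool /noise_wt; case: (z i) => /=; ring.
Qed.

Lemma relent_noise x y :
  \sum_z relent (noise z x) (noise z y) = jeffreys q (1 - q) * (hamming N x y)%:R.
Proof.
have coord i : \sum_z noise z x * (ln (noise_wt (z i == x i)) - ln (noise_wt (z i == y i))) =
               jeffreys q (1 - q) * (x i != y i)%:R.
  have := sum_ffun_prod_coord (fun j b => noise_wt (b == x j)) i
    (fun b => ln (noise_wt (b == x i)) - ln (noise_wt (b == y i))).
  rewrite /= => ->; rewrite [X in _ * X]big1 ?mulr1; last first.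
    by move=> j _; rewrite big_bool /noise_wt; case: (x j) => /=; ring.
  by rewrite big_bool /jeffreys /noise_wt; case: (x i); case: (y i) => /=; rewrite ?subrr; ring.
have -> : (hamming N x y)%:R = \sum_i (x i != y i)%:R :> R.
  rewrite /hamming -sum1_card natr_sum big_mkcond /=.
  by apply: eq_bigr => i _; rewrite inE; case: (_ != _).
rewrite mulr_sumr -(eq_bigr _ (fun i _ => coord i)) exchange_big /=.
apply: eq_bigr => z _.
rewrite /relent /noise ln_prod ?ln_prod; [|by move=> *; apply: noise_wt_gt0..].
by rewrite -sumrB mulr_sumr.
Qed.

Lemma ent_smooth_le_cost nu pi : (forall x, 0 < dens R N nu x) ->
  coupling R N nu (unif R N) pi ->
  (2 ^+ N)^-1 * ent (smooth (enum 'I_N) (dens R N nu)) <= jeffreys q (1 - q) * cost pi.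
Proof.
move=> rho0 [pi0 [pi_nu pi_mu]].
set m : R := (2 ^+ N)^-1; set rho := dens R N nu; set P := smooth (enum 'I_N) rho.
have m0 : 0 < m by rewrite invr_gt0 exprn_gt0.
pose a z (p : cube N * cube N) := pi p * noise z p.1.
pose b z (p : cube N * cube N) := pi p * noise z p.2.
have sum_a z : \sum_p a z p = m * P z.
  rewrite /a /P smooth_noise mulr_sumr sum_pair /=.
  by apply: eq_bigr => x _; rewrite -mulr_suml pi_nu densE -/m -/rho; ring.
have sum_b z : \sum_p b z p = m.
  rewrite /b sum_pair exchange_big /=.
  under eq_bigr => y _ do rewrite -mulr_suml pi_mu.
  by rewrite -mulr_sumr sum_noise mulr1.
have ent_z z : m * (P z * ln (P z)) = relent (\sum_p a z p) (\sum_p b z p).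
  rewrite sum_a sum_b -[X in relent _ X]mulr1 relent_mull ?ltW ?smooth_gt0 //.
  by rewrite /relent ln1 subr0.
have log_sum_z z : relent (\sum_p a z p) (\sum_p b z p) <= \sum_p relent (a z p) (b z p).
  apply: log_sum.
  - by move=> p; rewrite mulr_ge0 // ltW ?noise_gt0.
  - by move=> p; rewrite mulr_ge0 // ltW ?noise_gt0.
  - by move=> p; rewrite !pmulr_lgt0 ?noise_gt0.
  - by rewrite sum_a mulr_gt0 ?smooth_gt0.
  - by rewrite sum_b.
have sum_relent : \sum_z \sum_p relent (a z p) (b z p) = jeffreys q (1 - q) * cost pi.
  rewrite exchange_big /cost mulr_sumr; apply: eq_bigr => p _.
  under eq_bigr => z _ do rewrite relent_mull ?noise_gt0 //.
  by rewrite -mulr_sumr relent_noise mulrCA.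
rewrite /ent mulr_sumr (eq_bigr _ (fun z _ => ent_z z)) -sum_relent.
by apply: ler_sum => z _; apply: log_sum_z.
Qed.

Lemma relH_le_fisher_W1 nu : is_prob R N nu -> (forall x, 0 < dens R N nu x) ->
  relH R N nu <= (1 - q) * ((2 ^+ N)^-1 * \sum_i fisher_dir i (dens R N nu)) +
                 jeffreys q (1 - q) * W1 R N nu (unif R N).
Proof.
move=> nu_prob rho0; have m0 : 0 < (2 ^+ N)^-1 :> R by rewrite invr_gt0 exprn_gt0.
have := ler_wpM2l (ltW m0) (ent_smooth (enum 'I_N) rho0).
rewrite relH_dens_gt0E // big_enum /= mulrDr mulrCA => /le_trans; apply; rewrite lerD2l.
apply: le_mulW1 => // [|pi]; last exact: ent_smooth_le_cost.
by case/andP: q01 => q0 q1; rewrite jeffreys_ge0 ?subr_gt0.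
Qed.

End Smoothing.
End Hypercube.

Lemma entropy_tradeoff (R : realType) (H I W : R) : 0 <= W -> 4 * W <= I ->
  (forall q, 0 < q < 1 -> H <= (1 - q) * I + jeffreys q (1 - q) * W) ->
  H <= 2 * Num.sqrt (W * I) - 2 * W.
Proof.
move=> W0 WI H_le; have I0 : 0 <= I by lra.
have H_le_t t : 0 < t < 1 -> H <= t * I + (1 - 2 * t) * (ln (1 - t) - ln t) * W.
  move=> /andP[t0 t1]; have := H_le (1 - t); rewrite subKr /jeffreys.
  have -> : 1 - t - t = 1 - 2 * t by ring.
  by apply; apply/andP; split; lra.
have [W_eq0|W_neq0] := eqVneq W 0.
  rewrite W_eq0 mul0r sqrtr0 !mulr0 subr0 leNgt; apply/negP => H0.
  have t0 : 0 < H / (H + I + 1) by rewrite divr_gt0 //; lra.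
  have t1 : H / (H + I + 1) < 1 by rewrite ltr_pdivrMr ?mul1r; lra.
  have /H_le_t : 0 < H / (H + I + 1) < 1 by apply/andP.
  rewrite W_eq0 mulr0 addr0 mulrAC ler_pdivlMr; nra.
have W_gt0 : 0 < W by rewrite lt0r W_neq0.
set s := Num.sqrt (W * I); set t := s / I. (* t = sqrt (W / I) is 1 - q *)
have I_gt0 : 0 < I by lra.
have s_gt0 : 0 < s by rewrite sqrtr_gt0 mulr_gt0.
have ss : s * s = W * I by rewrite -expr2 sqr_sqrtr // mulr_ge0 // ltW.
have tI : t * I = s by rewrite divfK ?gt_eqF.
have t0 : 0 < t by rewrite divr_gt0.
have t_le : 2 * t <= 1 by rewrite mulrA ler_pdivrMr // mul1r; nra.
have W_st : W = s * t by apply: (mulIf (lt0r_neq0 I_gt0)); rewrite -mulrA tI ss.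
have ln_le : t * (ln (1 - t) - ln t) <= 1 - 2 * t.
  have t1 : 0 < 1 - t by lra.
  have := ler_wpM2l (ltW t0) (ln_le_subr1 (divr_gt0 t1 t0)).
  by rewrite ln_div ?posrE // [t * (_ - 1)]mulrBr mulrCA divff ?gt_eqF // !mulr1; lra.
set L := ln (1 - t) - ln t in ln_le.
have := H_le_t t; rewrite -/L tI => /(_ _)/le_trans; apply; first by apply/andP; lra.
have LW : (1 - 2 * t) * L * W <= (1 - 2 * t) * (1 - 2 * t) * s.
  have -> : (1 - 2 * t) * L * W = (1 - 2 * t) * (t * L) * s by rewrite W_st; ring.
  by rewrite ler_pM2r //; apply: ler_wpM2l => //; lra.
rewrite W_st; nra.
Qed.

Theorem mainTheorem1 (R : realType) (N : nat) (nu : cube N -> R) :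
  (0 < N)%N ->
  is_prob R N nu ->
  ((4 * W1 R N nu (unif R N))%:E <= fisherI R N nu)%E ->
  forall I : R, fisherI R N nu = I%:E ->
  relH R N nu <= 2 * Num.sqrt (W1 R N nu (unif R N) * I) - 2 * W1 R N nu (unif R N).
Proof.
move=> _ nu_prob W1_le I fisherI_fin.
have rho_gt0 := fisherI_fin_dens_gt0 nu_prob fisherI_fin.
have IE : I = (2 ^+ N)^-1 * \sum_i fisher_dir i (dens R N nu).
  by move: fisherI_fin; rewrite fisherI_dens_gt0E // => -[].
apply: entropy_tradeoff (W1_ge0 nu_prob) _ _.
  by move: W1_le; rewrite fisherI_fin lee_fin.
by move=> q q01; rewrite IE; apply: relH_le_fisher_W1.
Qed.
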